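(* Let ALG be an online algorithm for the online stochastic rewards problem and OPT a deterministic optimal fully offline policy. Suppose non-negative numbers $\lambda^\omega_t$ ($t\in T$) and $\theta^\omega_i$ ($i\in I$), defined for every sample path $\omega$, and constants $\alpha,\beta>0$ satisfy $$E_{\omega_i}\Big[\theta^\omega_i+\sum_{t:\,O^\omega_t=i}\lambda^\omega_t\,\Big|\,\omega_{-i}\Big]\ \ge\ \alpha\,E_{\omega_i}\big[\mathrm{OPT}^\omega_i\,\big|\,\omega_{-i}\big]\quad\text{for all } i\in I\text{ and all }\omega_{-i},$$ $$\beta\,\mathrm{ALG}\ \ge\ \sum_iE_\omega[\theta^\omega_i]+\sum_tE_\omega[\lambda^\omega_t].$$ Then $\mathrm{ALG}\ge\frac{\alpha}{\beta}\mathrm{OPT}$.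
   Context: Online stochastic rewards problem: bipartite graph $G=(I,T,E)$, resources $i\in I$ with rewards $r_i>0$ and unit capacity, arrivals $t\in T$ with edge probabilities $p_{it}$; each arrival is offered at most one available neighbour; an offer succeeds independently with probability $p_{it}$, earning $r_i$ and making $i$ unavailable. A fully offline policy knows the instance in advance, may adaptively choose the order in which to process arrivals, offers each arrival at most one available resource, and learns each outcome only after the offer. A sample path $\omega$ fixes an outcome $\mathbb{1}^\omega(i,t)\in\{0,1\}$ (independent Bernoulli($p_{it}$)) for every edge, and both ALG and OPT are run on the same $\omega$ (an offer of $i$ to $t$ succeeds iff $\mathbb{1}^\omega(i,t)=1$). $\omega_i$ denotes the outcomes of edges incident to $i$, $\omega_{-i}$ the outcomes of all other edges; $E_{\omega_i}[\cdot\mid\omega_{-i}]$ averages over $\omega_i$ only. $O^\omega_t$ is the resource offered to $t$ by OPT on $\omega$ ($\emptyset$ if none). $\mathrm{OPT}^\omega_i=r_i$ if OPT successfully matches $i$ on $\omega$ and $0$ otherwise. ALG and OPT also denote the respective expected total rewards. *)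

From HB Require Import structures.
From mathcomp Require Import all_boot all_order all_algebra.
Set Implicit Arguments. Unset Strict Implicit. Unset Printing Implicit Defensive.
Import Order.TTheory GRing.Theory Num.Theory.
Local Open Scope ring_scope.

Section Model.
Variables (I T : finType) (E : I -> T -> bool).

Definition edge : finType := {x : I * T | E x.1 x.2}.

(* a sample spath fixes an outcome for every edge *)
Definition spath := {ffun edge -> bool}.

Definition outcome (w : spath) (i : I) (t : T) : bool :=
  if (insub (i, t) : option edge) is Some e then w e else false.

(* history: processed arrivals, with the resource offered (if any) and outcome *)
Definition hist := seq (T * option I * bool).

Definition matched (h : hist) (i : I) : bool :=
  has (fun x => (x.1.2 == Some i) && x.2) h.

Definition processed (h : hist) (t : T) : bool :=
  has (fun x => x.1.1 == t) h.

Definition process (w : spath) (h : hist) (t : T) (o : option I) : hist :=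
  let o' := if o is Some i then
              (if E i t && ~~ matched h i then Some i else None) else None in
  rcons h (t, o', if o' is Some i then outcome w i t else false).

(* deterministic fully offline adaptive policy: given the history, choose the
   next arrival to process and the offer for it (None = stop) *)
Definition offpol := hist -> option (T * option I).

Definition off_step (P : offpol) (w : spath) (h : hist) : hist :=
  match P h with
  | None => h
  | Some (t, o) => if processed h t then h else process w h t o
  end.

Definition off_run (P : offpol) (w : spath) : hist := iter #|T| (off_step P w) [::].

(* deterministic online policy: arrivals come in the order enum T; the offer to
   t depends only on the history of the previous arrivals *)
Definition onpol := T -> hist -> option I.

Definition on_run (A : onpol) (w : spath) : hist :=
  foldl (fun h t => process w h t (A t h)) [::] (enum T).

Definition offered (h : hist) (t : T) : option I :=
  head None [seq x.1.2 | x <- h & x.1.1 == t].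

Variable R : realFieldType.
Variables (r : I -> R) (p : I -> T -> R).

Definition reward (h : hist) : R := \sum_i (if matched h i then r i else 0).

Definition pw (e : edge) (b : bool) : R :=
  if b then p (val e).1 (val e).2 else 1 - p (val e).1 (val e).2.

Definition Pr (w : spath) : R := \prod_e pw e (w e).

Definition Expect (f : spath -> R) : R := \sum_w Pr w * f w.

(* E_{w_i}[ f | w_{-i} ] : average over the outcomes of edges incident to i,
   the other outcomes being those of w *)
Definition condE (i : I) (f : spath -> R) (w : spath) : R :=
  \sum_(w' : spath | [forall e : edge, ((val e).1 != i) ==> (w' e == w e)])
     (\prod_(e : edge | (val e).1 == i) pw e (w' e)) * f w'.

(* expected reward of a randomized online algorithm, a finite mixture of
   deterministic online policies *)
Definition ALGval (alg : seq (R * onpol)) : R :=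
  \sum_(x <- alg) x.1 * Expect (fun w => reward (on_run x.2 w)).

Definition OPTval (P : offpol) : R := Expect (fun w => reward (off_run P w)).

Definition OPTi (P : offpol) (w : spath) (i : I) : R :=
  if matched (off_run P w) i then r i else 0.

End Model.

Arguments Expect {I T} E {R} p f.
Arguments condE {I T} E {R} p i f w.
Arguments OPTi {I T} E {R} r P w i.
Arguments off_run {I T} E P w.
Arguments on_run {I T} E A w.

(* Writing OPT = sum_i E[OPT_i], the argument is a three-line chain:
     alpha * E[OPT_i] = E[alpha * E_{w_i}[OPT_i | w_{-i}]]
                      <= E[E_{w_i}[theta_i + sum_{t : O_t = i} lam_t | w_{-i}]]
                      =  E[theta_i + sum_{t : O_t = i} lam_t],
   using the tower property of the conditional expectation around the first
   hypothesis; summing over i, each arrival t is charged to at most one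
   resource, so the right-hand sides add up to at most
   sum_i E[theta_i] + sum_t E[lam_t] <= beta * ALG. *)
From HB Require Import structures.
From mathcomp Require Import all_boot all_order all_algebra.
From mathcomp Require Import ring.
Set Implicit Arguments. Unset Strict Implicit. Unset Printing Implicit Defensive.
Import Order.TTheory GRing.Theory Num.Theory.
Local Open Scope ring_scope.

Section Expectation.
Variables (R : realFieldType) (I T : finType) (E : I -> T -> bool).
Variable p : I -> T -> R.

Lemma ExpectD (f g : spath E -> R) :
  Expect E p (fun w => f w + g w) = Expect E p f + Expect E p g.
Proof. by rewrite /Expect -big_split; apply: eq_bigr => w _; rewrite mulrDr. Qed.

Lemma ExpectZ (c : R) (f : spath E -> R) :
  Expect E p (fun w => c * f w) = c * Expect E p f.
Proof. by rewrite /Expect mulr_sumr; apply: eq_bigr => w _; rewrite mulrCA. Qed.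

Lemma Expect_sum (J : finType) (f : spath E -> J -> R) :
  Expect E p (fun w => \sum_j f w j) = \sum_j Expect E p (fun w => f w j).
Proof. by rewrite /Expect exchange_big; apply: eq_bigr => w _; rewrite mulr_sumr. Qed.

Hypothesis p_prob : forall i t, 0 <= p i t <= 1.

Lemma pw_ge0 (e : edge E) (b : bool) : 0 <= pw p e b.
Proof.
by have /andP[p0 p1] := p_prob (val e).1 (val e).2; rewrite /pw; case: b; rewrite ?subr_ge0.
Qed.

Lemma Expect_le (f g : spath E -> R) :
  (forall w, f w <= g w) -> Expect E p f <= Expect E p g.
Proof.
move=> fg; apply: ler_sum => w _; apply: ler_wpM2l (fg w).
by apply: prodr_ge0 => e _; apply: pw_ge0.
Qed.

End Expectation.

Section Conditioning.
Variables (R : realFieldType) (I T : finType) (E : I -> T -> bool).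
Variables (p : I -> T -> R) (i : I).

Definition agree (w w' : spath E) : bool :=
  [forall e : edge E, ((val e).1 != i) ==> (w' e == w e)].

Lemma agreeC (w w' : spath E) : agree w w' = agree w' w.
Proof. by apply: eq_forallb => e; rewrite [w e == _]eq_sym. Qed.

Definition weight_at (w : spath E) : R :=
  \prod_(e : edge E | (val e).1 == i) pw p e (w e).

Definition weight_off (w : spath E) : R :=
  \prod_(e : edge E | (val e).1 != i) pw p e (w e).

Lemma Pr_split (w : spath E) : Pr p w = weight_at w * weight_off w.
Proof. by rewrite /Pr (bigID (fun e : edge E => (val e).1 == i)). Qed.

Lemma weight_off_agree {w w' : spath E} :
  agree w w' -> weight_off w' = weight_off w.
Proof.
by move=> /forallP ww'; apply: eq_bigr => e ei; move/implyP/(_ ei)/eqP: (ww' e) => ->.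
Qed.

(* The conditional weights of the paths agreeing with w off i sum to one:
   the sum factors over the edges at i, each contributing p + (1 - p). *)
Lemma weight_at_sum1 (w : spath E) : \sum_(w' | agree w w') weight_at w' = 1.
Proof.
pose Q (e : edge E) (b : bool) := ((val e).1 == i) || (b == w e).
pose F (e : edge E) (b : bool) := if (val e).1 == i then pw p e b else 1.
transitivity (\prod_e \sum_(b | Q e b) F e b); last first.
  apply: big1 => e _; rewrite /Q /F; case: ((val e).1 == i) => /=.
    by rewrite big_mkcond big_bool /= /pw; ring.
  by rewrite (big_pred1 (w e)).
rewrite (bigA_distr_big_dep Q F); apply: eq_big => [w'|w' _].
  apply/forallP/familyP => H e; have := H e; rewrite /Q /in_mem /=.
    by case: ((val e).1 == i).
  by case: ((val e).1 == i).
rewrite [RHS](bigID (fun e : edge E => (val e).1 == i)) /=.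
rewrite [X in _ * X]big1 ?mulr1 => [|e /negbTE]; last by rewrite /F => ->.
by apply: eq_bigr => e ei; rewrite /F ei.
Qed.

Lemma Expect_condE (g : spath E -> R) :
  Expect E p (condE E p i g) = Expect E p g.
Proof.
rewrite /Expect /condE.
under eq_bigr do rewrite big_distrr /= (big_mkcond (fun w' => _)).
rewrite exchange_big; apply: eq_bigr => w' _.
rewrite -big_mkcond (eq_bigl (agree w')) => [|w]; last exact: agreeC.
under eq_bigr => w ww' do
  rewrite Pr_split (weight_off_agree ww') -mulrA.
by rewrite -big_distrl /= weight_at_sum1 -/(weight_at w') Pr_split mul1r mulrCA mulrA.
Qed.

End Conditioning.

Lemma charge_offered (R : numDomainType) (I T : finType)
    (o : T -> option I) (lam : T -> R) :
  (forall t, 0 <= lam t) ->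
  \sum_i \sum_(t | o t == Some i) lam t <= \sum_t lam t.
Proof.
move=> lam0; rewrite (exchange_big_dep predT) //=; apply: ler_sum => t _.
case: (o t) => [j|]; last by rewrite big_pred0.
by rewrite (big_pred1 j) // => i; rewrite eq_sym; apply/eqP/eqP => [[]|->].
Qed.

Theorem lemma5 (R : realFieldType) (I T : finType) (E : I -> T -> bool)
  (r : I -> R) (p : I -> T -> R)
  (hr : forall i, 0 < r i) (hp : forall i t, 0 <= p i t <= 1)
  (alg : seq (R * onpol I T))
  (halg0 : all (fun x => 0 <= x.1) alg) (halg1 : \sum_(x <- alg) x.1 = 1)
  (OPT : offpol I T)
  (hopt : forall P : offpol I T, OPTval E r p P <= OPTval E r p OPT)
  (lam : spath E -> T -> R) (theta : spath E -> I -> R) (alpha beta : R)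
  (hlam : forall w t, 0 <= lam w t) (htheta : forall w i, 0 <= theta w i)
  (halpha : 0 < alpha) (hbeta : 0 < beta)
  (h1 : forall (i : I) (w : spath E),
      alpha * condE E p i (fun w' => OPTi E r OPT w' i) w <=
      condE E p i (fun w' => theta w' i +
        \sum_(t : T | offered (off_run E OPT w') t == Some i) lam w' t) w)
  (h2 : \sum_i Expect E p (fun w => theta w i) + \sum_t Expect E p (fun w => lam w t)
        <= beta * ALGval E r p alg) :
  alpha / beta * OPTval E r p OPT <= ALGval E r p alg.
Proof.
rewrite mulrAC ler_pdivrMr // [X in _ <= X]mulrC; apply: le_trans h2.
have OPT_sum : OPTval E r p OPT = \sum_i Expect E p (fun w => OPTi E r OPT w i).
  by rewrite /OPTval -Expect_sum.
(* the first hypothesis, integrated over w_{-i} *)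
have per_resource i : alpha * Expect E p (fun w => OPTi E r OPT w i) <=
    Expect E p (fun w => theta w i +
      \sum_(t | offered (off_run E OPT w) t == Some i) lam w t).
  rewrite -(Expect_condE p i) -[X in _ <= X](Expect_condE p i) -ExpectZ.
  exact: Expect_le hp _ _ (h1 i).
rewrite OPT_sum mulr_sumr; apply: le_trans (ler_sum _ (fun i _ => per_resource i)) _.
(* each lam_t is charged to the single resource offered to t *)
under eq_bigr do rewrite ExpectD.
rewrite big_split lerD2l -!Expect_sum.
by apply: Expect_le hp _ _ _ => w; apply: charge_offered.
Qed.
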